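(* Let $T$ be a p-string of length $n$ and let $1\le i\le j\le n$. If $\mathrm{prev}(T[i..j])$ is represented by $\mathrm{PPH}(T)$, then $\mathrm{prev}(X)$ is represented by $\mathrm{PPH}(T)$ for every substring $X$ of $T[i..j]$.
   Context: Let $\Sigma$ and $\Pi$ be disjoint alphabets. A p-string is a finite string over $\Sigma\cup\Pi$. For a string $S$, $S[i]$ is its $i$-th character, $S[i..j]$ is the substring from position $i$ to $j$ (empty if $j<i$), and $S[i..]=S[i..|S|]$. The previous encoding $\mathrm{prev}(S)$ of a p-string $S$ of length $n$ is the sequence of length $n$ defined by: - $\mathrm{prev}(S)[i]=S[i]$ if $S[i]\in\Sigma$; - $\mathrm{prev}(S)[i]=0$ if $S[i]\in\Pi$ does not occur in $S[1..i-1]$; - $\mathrm{prev}(S)[i]=i-j$ otherwise, where $j<i$ is the largest position with $S[j]=S[i]$. Sequence hash tree. Let $\langle S_1,\ldots,S_k\rangle$ be a sequence of strings with $S_1=\varepsilon$ and with $S_i$ not a prefix of $S_j$ for any $j<i$. Its sequence hash tree is built as follows. Start from a root representing $\varepsilon$. For $i=2,\ldots,k$, insert as a new node the shortest prefix $p_i$ of $S_i$ that is not yet a node. Attach it as a child of the longest prefix $q_i$ of $S_i$ that is already a node, via an edge labeled $S_i[|q_i|+1]$. The parameterized position heap $\mathrm{PPH}(T)$ is the sequence hash tree of $\langle\varepsilon,\mathrm{prev}(T[n..]),\ldots,\mathrm{prev}(T[1..])\rangle$. A sequence $P$ over $\Sigma\cup\{0,\ldots,n-1\}$ is represented by $\mathrm{PPH}(T)$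 if $\mathrm{PPH}(T)$ has a path starting at the root whose edge labels spell out $P$. *)

From mathcomp Require Import all_boot.
Set Implicit Arguments. Unset Strict Implicit. Unset Printing Implicit Defensive.

(* Characters of a p-string: inl = static symbol in Sigma, inr = parameter in Pi.
   (The sum type makes Sigma and Pi disjoint.) *)
Section PString.
Variables (Sig Pi : eqType).
Definition pchar := (Sig + Pi)%type.

(* prev-encoding value at 0-indexed position i of S, with character x = S[i]:
   a Sigma symbol is kept; a parameter gets 0 if it does not occur before,
   otherwise the distance i - j to its previous occurrence j. *)
Definition prev_at (S : seq pchar) (i : nat) (x : pchar) : Sig + nat :=
  match x with
  | inl a => inl a
  | inr p => let pre := take i S in
             if x \in pre then inr (index x (rev pre)).+1 else inr 0
  end.

Definition prev_enc (S : seq pchar) : seq (Sig + nat) :=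
  map (fun ix => prev_at S ix.1 ix.2) (zip (iota 0 (size S)) S).

(* 1-indexed substring S[i..j] *)
Definition substr (S : seq pchar) (i j : nat) : seq pchar := drop i.-1 (take j S).
End PString.

(* Sequence hash trees: nodes are identified with the strings they represent;
   an edge is (parent, label, child). *)
Section SHT.
Variable A : eqType.
Definition sht_state := (seq (seq A) * seq (seq A * A * seq A))%type.

Definition sht_step (st : sht_state) (S : seq A) : sht_state :=
  let: (N, E) := st in
  let notnode k := take k S \notin N in
  if has notnode (iota 0 (size S).+1) then
    let p := take (find notnode (iota 0 (size S).+1)) S in
    let m := foldr maxn 0 [seq k <- iota 0 (size S).+1 | take k S \in N] in
    let q := take m S in
    match drop m S with
    | c :: _ => (rcons N p, rcons E (q, c, p))
    | [::] => (N, E)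
    end
  else (N, E).

(* sequence hash tree of <eps, S_2, ..., S_k>; the argument is [S_2; ...; S_k] *)
Definition sht (l : seq (seq A)) : sht_state := foldl sht_step ([:: [::]], [::]) l.

Fixpoint spells (E : seq (seq A * A * seq A)) (u : seq A) (P : seq A) : Prop :=
  match P with
  | [::] => True
  | c :: P' => exists v, (u, c, v) \in E /\ spells E v P'
  end.

Definition represented (t : sht_state) (P : seq A) : Prop := spells t.2 [::] P.
End SHT.

Definition PPH (Sig Pi : eqType) (T : seq (pchar Sig Pi)) : sht_state _ :=
  sht [seq prev_enc (drop k T) | k <- rev (iota 0 (size T))].

From Pilot Require Import Defs.
From mathcomp Require Import all_boot zify.
Set Implicit Arguments. Unset Strict Implicit. Unset Printing Implicit Defensive.

(* The nodes of a sequence hash tree form a prefix-closed set containing the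
   root, every edge goes from some u to rcons u c, so a sequence is represented
   exactly when it is a node.  For PPH(T) the node set is moreover closed under
   deleting the first character of the underlying p-string: the node inserted
   for the suffix T[k..] is prev(T[k..k+f-1]), and prev(T[k+1..k+f-1]) is
   already a node because the node inserted just before, for T[k+1..], has
   length at least f - 1.  Closure under prefixes and under suffixes gives
   every substring. *)

Section SequenceHashTree.
Variable A : eqType.
Implicit Types (N : seq (seq A)) (S u w : seq A).

Definition prefix_closed N := forall u c, rcons u c \in N -> u \in N.

Lemma prefix_closed_take N u l : prefix_closed N -> u \in N -> take l u \in N.
Proof.
move=> closedN; elim/last_ind: u l => [|u c IHu] l uN; first by case: l.
rewrite -cats1; case: (leqP l (size u)) => [le_lu|lt_ul].
  by rewrite takel_cat // IHu // (closedN _ c).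
by rewrite take_oversize ?size_cat /= ?addn1 // cats1.
Qed.

Definition sht_wf (t : sht_state A) :=
  [/\ [::] \in t.1, prefix_closed t.1 &
      forall u c v, ((u, c, v) \in t.2) = (v == rcons u c) && (v \in t.1)].

Lemma foldr_maxn_iota m k x : foldr maxn x (iota m k.+1) = maxn (m + k) x.
Proof.
elim: k m => [|k IHk] m; first by rewrite /= addn0.
transitivity (maxn m (foldr maxn x (iota m.+1 k.+1))); first by [].
rewrite IHk; lia.
Qed.

Lemma sht_step_insert N E S : [::] \in N -> prefix_closed N -> S \notin N ->
  exists f c, [/\ 0 < f <= size S, forall l, (take l S \in N) = (l < f),
    take f S = rcons (take f.-1 S) c &
    sht_step (N, E) S = (rcons N (take f S), rcons E (take f.-1 S, c, take f S))].
Proof.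
move=> nilN closedN SN.
set notnode := fun k => take k S \notin N.
have has_notnode : has notnode (iota 0 (size S).+1).
  by apply/hasP; exists (size S); rewrite ?mem_iota ?add0n ?ltnSn // /notnode take_size.
set f := find notnode (iota 0 (size S).+1).
have lt_fS : f < (size S).+1 by rewrite -[X in _ < X](size_iota 0) -has_find.
have notnode_f : notnode f by have := nth_find 0 has_notnode; rewrite nth_iota.
have memN l : (take l S \in N) = (l < f).
  case: (ltnP l f) => [lt_lf|le_fl].
    have := before_find 0 lt_lf; rewrite nth_iota ?add0n; last exact: ltn_trans lt_fS.
    by move/negbFE.
  apply/negbTE/negP => /(prefix_closed_take f closedN).
  by rewrite take_takel //; apply/negP.
have f_gt0 : 0 < f by rewrite -memN take0.
have longest : [seq k <- iota 0 (size S).+1 | take k S \in N] = iota 0 f.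
  rewrite -(filter_iota_ltn 0 (ltnW lt_fS)).
  by apply: eq_in_filter => k _; rewrite memN.
have maxf : foldr maxn 0 (iota 0 f) = f.-1.
  by case: f f_gt0 {lt_fS notnode_f memN longest} => // f _; rewrite foldr_maxn_iota.
have : 0 < size (drop f.-1 S) by rewrite size_drop; lia.
case dropS: (drop f.-1 S) => [|c s] // _.
have takeS : take f S = rcons (take f.-1 S) c.
  by rewrite {1}(_ : f = f.-1 + 1) ?takeD ?dropS /= ?take0 ?cats1 //; lia.
exists f, c; split; rewrite ?f_gt0 //.
by rewrite /sht_step -/notnode has_notnode longest maxf dropS.
Qed.

Lemma sht_step_wf t S : sht_wf t -> S \notin t.1 -> sht_wf (sht_step t S).
Proof.
case: t => N E [nilN closedN edgeE] SN.
have [f [c [_ memN takeS ->]]] := sht_step_insert E nilN closedN SN.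
split=> /=; first by rewrite mem_rcons in_cons nilN orbT.
  move=> u c'; rewrite !mem_rcons !in_cons => /orP[/eqP|/closedN ->]; last by rewrite orbT.
  rewrite takeS => /rcons_inj[-> _].
  by rewrite memN ltn_predL -memN take0 nilN orbT.
move=> u c' v; rewrite mem_rcons in_cons edgeE mem_rcons in_cons andb_orr.
congr (_ || _); apply/eqP/andP => [[-> -> ->]|[/eqP -> /eqP]]; first by rewrite takeS.
by rewrite takeS => /rcons_inj[-> ->].
Qed.

Lemma sht_wf_spells t w P : sht_wf t -> w \in t.1 -> spells t.2 w P <-> w ++ P \in t.1.
Proof.
case: t => N E [/= _ closedN edgeE]; elim: P w => [|c P IHP] w wN /=; first by rewrite cats0.
rewrite -cat_rcons; split => [[v []]|].
  by rewrite edgeE => /andP[/eqP-> vN] /IHP->.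
move=> wcPN; have wcN : rcons w c \in N.
  have := prefix_closed_take (size w).+1 closedN wcPN.
  by rewrite -cats1 -catA take_cat ltnNge leqnSn subSnn /= take0.
by exists (rcons w c); rewrite edgeE eqxx wcN IHP.
Qed.

Lemma sht_wf_represented t P : sht_wf t -> represented t P <-> P \in t.1.
Proof. by case=> nil_t ? ?; apply: sht_wf_spells. Qed.

End SequenceHashTree.

Section PrevEncoding.
Variables Sig Pi : eqType.
Local Notation pstring := (seq (pchar Sig Pi)).
Implicit Types (S X Y : pstring) (x : pchar Sig Pi).

Definition prev_next S x : Sig + nat :=
  match x with
  | inl a => inl a
  | inr _ => if x \in S then inr (index x (rev S)).+1 else inr 0
  end.

Lemma size_prev_enc S : size (prev_enc S) = size S.
Proof. by rewrite /prev_enc size_map size_zip size_iota minnn. Qed.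

Lemma prev_at_cat S1 S2 i x :
  i <= size S1 -> Defs.prev_at (S1 ++ S2) i x = Defs.prev_at S1 i x.
Proof. by case: x => //= p le_iS1; rewrite takel_cat. Qed.

Lemma prev_enc_rcons S x : prev_enc (rcons S x) = rcons (prev_enc S) (prev_next S x).
Proof.
rewrite /prev_enc size_rcons -addn1 iotaD -cats1 zip_cat ?size_iota //.
rewrite map_cat /= cats1; congr rcons; last by case: x => //= p; rewrite take_size_cat.
apply/eq_in_map => -[i y] /= /(map_f fst); rewrite -/(unzip1 _).
by rewrite unzip1_zip ?size_iota // mem_iota => /ltnW; apply: prev_at_cat.
Qed.

Lemma prev_enc_take S l : prev_enc (take l S) = take l (prev_enc S).
Proof.
elim/last_ind: S l => [|S x IHS] l; first by case: l.
rewrite prev_enc_rcons -!cats1; case: (leqP l (size S)) => [le_lS|lt_Sl].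
  by rewrite !takel_cat ?size_prev_enc // IHS.
by rewrite !take_oversize ?size_cat ?size_prev_enc /= ?addn1 // !cats1 prev_enc_rcons.
Qed.

(* Deleting the first character z of z :: S can change the encoding of a
   character appended to S only if it referred back to z, at distance
   (size S).+1; that reference becomes 0. *)
Definition unlink (d : nat) (v : Sig + nat) : Sig + nat :=
  if v == inr d then inr 0 else v.

Lemma prev_next_behead z S x : prev_next S x = unlink (size S).+1 (prev_next (z :: S) x).
Proof.
rewrite /unlink; case: x => [//|p] /=.
rewrite in_cons rev_cons -cats1 index_cat mem_rev.
case: (boolP (inr p \in S)) => [pS|pNS]; rewrite ?orbT ?orbF /=.
  case: eqP => // -[eq_idx].
  by move: (index_mem (inr p) (rev S)); rewrite mem_rev pS eq_idx size_rev ltnn.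
by case: (inr p =P z) => [<-|//]; rewrite eqxx size_rev addn0 eqxx.
Qed.

Lemma prev_enc_behead X Y :
  prev_enc X = prev_enc Y -> prev_enc (behead X) = prev_enc (behead Y).
Proof.
elim/last_ind: X Y => [|X x IHX] Y.
  by case: Y => // y Y /(congr1 size); rewrite size_prev_enc.
case/lastP: Y => [|Y y]; first by move/(congr1 size); rewrite size_prev_enc size_rcons.
rewrite !prev_enc_rcons => /rcons_inj[eqXY eq_next].
have /eqP := congr1 size eqXY; rewrite !size_prev_enc.
case: X Y eqXY eq_next {IHX} (IHX Y) => [|z X] [|w Y] //= eqXY eq_next IH /eqP[eq_size].
rewrite !prev_enc_rcons (IH eqXY) (prev_next_behead z X x) (prev_next_behead w Y y).
by rewrite eq_next eq_size.
Qed.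

Definition prev_suffix_closed (N : seq (seq (Sig + nat))) :=
  forall Y, prev_enc Y \in N -> prev_enc (behead Y) \in N.

Lemma prev_enc_infix_mem N X Y : prefix_closed N -> prev_suffix_closed N ->
  prev_enc Y \in N -> infix X Y -> prev_enc X \in N.
Proof.
move=> prefN sufN YN /infixP[Y1 [Y2 eqY]]; move: YN; rewrite {Y}eqY.
elim: Y1 => [|y Y1 IHY1] /=; last by move/(sufN (y :: _)).
by move/(prefix_closed_take (size X) prefN); rewrite -prev_enc_take take_size_cat.
Qed.

End PrevEncoding.

Section PositionHeap.
Variables (Sig Pi : eqType) (T : seq (pchar Sig Pi)).
Local Notation n := (size T).

Definition pph_suffix k := prev_enc (drop k T).

Definition pph_from k := sht [seq pph_suffix m | m <- rev (iota k (n - k))].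

Lemma size_pph_suffix k : size (pph_suffix k) = n - k.
Proof. by rewrite size_prev_enc size_drop. Qed.

Lemma pph_from_ge k : n <= k -> pph_from k = ([:: [::]], [::]).
Proof. by rewrite /pph_from -subn_eq0 => /eqP->. Qed.

Lemma pph_from0 : pph_from 0 = PPH T.
Proof. by rewrite /pph_from subn0. Qed.

Lemma pph_from_step k : k < n -> pph_from k = sht_step (pph_from k.+1) (pph_suffix k).
Proof.
move=> lt_kn; rewrite /pph_from /sht (_ : n - k = (n - k.+1).+1); last by lia.
by rewrite [iota _ _]/= rev_cons map_rcons foldl_rcons.
Qed.

Lemma pph_from_wf k : sht_wf (pph_from k) /\ {in (pph_from k).1, forall u, size u <= n - k}.
Proof.
have [m] := ubnP (n - k); elim: m k => // m IHm k lt_nk_m.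
case: (ltnP k n) => [lt_kn|le_nk]; last first.
  rewrite pph_from_ge //; split; last by move=> u; rewrite inE => /eqP->.
  split=> //= [u c /[!inE] /eqP/(congr1 size)|u c v]; first by rewrite size_rcons.
  by rewrite inE; case: eqP => // ->; rewrite -size_eq0 size_rcons.
have [wf_next size_next] := IHm k.+1 ltac:(lia).
have suffixN : pph_suffix k \notin (pph_from k.+1).1.
  by apply/negP => /size_next; rewrite size_pph_suffix; lia.
rewrite (pph_from_step lt_kn); split; first exact: sht_step_wf.
case: (pph_from k.+1) wf_next size_next suffixN => N E [nilN closedN _] size_next suffixN.
have [f [c [/andP[_ le_f] _ _ ->]]] := sht_step_insert E nilN closedN suffixN.
move=> u; rewrite mem_rcons in_cons => /orP[/eqP->|/size_next]; last by lia.
by rewrite size_take_min size_pph_suffix in le_f *; lia.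
Qed.

Lemma pph_from_insert k : k < n -> exists2 f, 0 < f <= n - k &
  (forall l, (take l (pph_suffix k) \in (pph_from k.+1).1) = (l < f)) /\
  (pph_from k).1 = rcons (pph_from k.+1).1 (take f (pph_suffix k)).
Proof.
move=> lt_kn; have [[nilN closedN _] size_next] := pph_from_wf k.+1.
have suffixN : pph_suffix k \notin (pph_from k.+1).1.
  by apply/negP => /size_next; rewrite size_pph_suffix; lia.
have [f [c [lt_f memN _ stepS]]] := sht_step_insert (pph_from k.+1).2 nilN closedN suffixN.
exists f; first by rewrite -size_pph_suffix.
by rewrite -surjective_pairing in stepS; rewrite (pph_from_step lt_kn) stepS.
Qed.

Lemma prev_enc_behead_take k l :
  prev_enc (behead (take l (drop k T))) = take l.-1 (pph_suffix k.+1).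
Proof.
rewrite /pph_suffix -prev_enc_take -[k.+1]add1n -drop_drop drop1.
by case: (drop k T) => [|x s]; case: l => [|l] /=; rewrite ?take0.
Qed.

(* The node inserted for T[k.+1..] is at least as long as any prefix of
   prev(T[k..]) that is already a node: a longer one would, by suffix
   closure, yield a longer node prefix of prev(T[k.+1..]) before that insertion. *)
Lemma pph_from_take_succ k l : prev_suffix_closed Pi (pph_from k.+2).1 ->
  take l (pph_suffix k) \in (pph_from k.+1).1 ->
  take l (pph_suffix k.+1) \in (pph_from k.+1).1.
Proof.
move=> suf_next2 take_k.
have [[nilN closedN _] _] := pph_from_wf k.+1.
case: (ltnP k.+1 n) => [lt_k1n|le_nk1]; last first.
  by rewrite /pph_suffix drop_oversize.
have [f' /andP[_ le_f'] [memN' nodes_next]] := pph_from_insert lt_k1n.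
case: (leqP l f') => [le_lf'|lt_f'l].
  rewrite -(take_takel _ le_lf') (prefix_closed_take l closedN) //.
  by rewrite nodes_next mem_rcons mem_head.
move: take_k; rewrite nodes_next mem_rcons in_cons => /orP[/eqP/(congr1 size)|].
  by rewrite !size_take_min !size_pph_suffix; lia.
case: l lt_f'l => // l lt_f'l.
by rewrite /pph_suffix -prev_enc_take => /suf_next2; rewrite prev_enc_behead_take memN'; lia.
Qed.

Lemma pph_from_suffix_closed k : prev_suffix_closed Pi (pph_from k).1.
Proof.
have [m] := ubnP (n - k); elim: m k => // m IHm k lt_nk_m.
case: (ltnP k n) => [lt_kn|le_nk]; last first.
  rewrite pph_from_ge // => Y; rewrite !inE -!size_eq0 !size_prev_enc size_behead.
  by move=> /eqP ->.
have [f /andP[f_gt0 _] [memN ->]] := pph_from_insert lt_kn.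
move=> Y; rewrite !mem_rcons !in_cons => /orP[/eqP eqY|/(IHm k.+1 ltac:(lia))->].
  rewrite /pph_suffix -prev_enc_take in eqY.
  rewrite (prev_enc_behead eqY) prev_enc_behead_take pph_from_take_succ ?orbT //.
  - by apply: IHm; lia.
  - by rewrite memN ltn_predL.
by rewrite orbT.
Qed.

End PositionHeap.

Theorem lemma2 (Sig Pi : eqType) (T : seq (pchar Sig Pi)) (i j : nat) :
  1 <= i <= j -> j <= size T ->
  represented (PPH T) (prev_enc (substr T i j)) ->
  forall X : seq (pchar Sig Pi), infix X (substr T i j) ->
    represented (PPH T) (prev_enc X).
Proof.
move=> _ _; rewrite -pph_from0; have [wf0 _] := pph_from_wf T 0.
have [_ prefix_closed0 _] := wf0.
move=> /(sht_wf_represented _ wf0) mem_ij X infix_X; apply/(sht_wf_represented _ wf0).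
exact: prev_enc_infix_mem prefix_closed0 (@pph_from_suffix_closed _ _ T 0) mem_ij infix_X.
Qed.
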